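(* Let $A \in \mathbb{R}^{n\times d}$ and let $\lbrace w_l : l \geq 0\rbrace \subset \mathbb{R}^n$ be an arbitrary sequence. Let $\mathcal{R}_0 = \lbrace 0 \rbrace \subset \mathbb{R}^d$ and $\mathcal{R}_l = \mathrm{span}\lbrace A'w_0,\ldots,A'w_{l-1}\rbrace$ for $l \geq 1$. Let $S_0 = I_d$ and for $l \geq 0$ define $$S_{l+1} = \begin{cases} S_l - \dfrac{S_l A' w_l w_l' A S_l}{w_l' A S_l A' w_l} & \text{if } S_l A' w_l \neq 0,\\ S_l & \text{otherwise.}\end{cases}$$ Then for every $l \geq 0$, $S_l$ is an orthogonal projection matrix onto $\mathcal{R}_l^{\perp}$.
   Context: $A'$ denotes the transpose of $A$; $I_d$ is the $d\times d$ identity matrix. *)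

(* Vectors of R^n are column vectors 'cV[R]_n; A' is A^T. *)
From HB Require Import structures.
From mathcomp Require Import all_boot all_order all_algebra.
Set Implicit Arguments. Unset Strict Implicit. Unset Printing Implicit Defensive.
Import Order.TTheory GRing.Theory Num.Theory.
Local Open Scope ring_scope.

Definition proj_step (R : realFieldType) (n d : nat) (A : 'M[R]_(n, d))
  (wl : 'cV[R]_n) (S : 'M[R]_d) : 'M[R]_d :=
  if S *m A^T *m wl != 0 then
    S - ((wl^T *m A *m S *m A^T *m wl) 0 0)^-1 *:
          (S *m A^T *m wl *m wl^T *m A *m S)
  else S.

Fixpoint proj_seq (R : realFieldType) (n d : nat) (A : 'M[R]_(n, d))
  (w : nat -> 'cV[R]_n) (l : nat) : 'M[R]_d :=
  match l with
  | 0 => 1%:M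
  | l'.+1 => proj_step A (w l') (proj_seq A w l')
  end.

(* Matrix whose rows are (A' w_0)', ..., (A' w_{l-1})'; its row space is R_l
   (for l = 0 it is the empty matrix, whose row space is {0}). *)
Definition gen_mx (R : realFieldType) (n d : nat) (A : 'M[R]_(n, d))
  (w : nat -> 'cV[R]_n) (l : nat) : 'M[R]_(l, d) :=
  \matrix_(i < l) (A^T *m w i)^T.

Definition in_perp (R : realFieldType) (n d : nat) (A : 'M[R]_(n, d))
  (w : nat -> 'cV[R]_n) (l : nat) (x : 'cV[R]_d) : Prop :=
  forall y : 'rV[R]_d, (y <= gen_mx A w l)%MS -> y *m x = 0.

Definition orth_proj_onto (R : realFieldType) (d : nat) (P : 'M[R]_d)
  (V : 'cV[R]_d -> Prop) : Prop :=
  [/\ P^T = P, P *m P = P &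
      forall x : 'cV[R]_d, (exists y : 'cV[R]_d, x = P *m y) <-> V x].

(* Each S_l is symmetric and idempotent, and its fixed vectors are exactly
   R_l^perp; for such a matrix the range is the fixed space.  Given S_l and
   u = A' w_l, every vector fixed by S_l satisfies u' x = (S_l u)' x, so
   R_{l+1}^perp is the part of the range of S_l orthogonal to v = S_l u.
   If v = 0 nothing changes; otherwise S_{l+1} = S_l - v v' / (v' v) is the
   symmetric idempotent removing the line spanned by v from the range of S_l. *)
From HB Require Import structures.
From mathcomp Require Import all_boot all_order all_algebra.
From Stdlib Require Import Setoid.
Import Order.TTheory GRing.Theory Num.Theory.
Local Open Scope ring_scope.
Set Implicit Arguments. Unset Strict Implicit.

Lemma mulmx_tr_self_eq0 (R : realFieldType) (m : nat) (v : 'cV[R]_m) :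
  ((v^T *m v) 0 0 == 0) = (v == 0).
Proof.
apply/idP/eqP => [|->]; last by rewrite mulmx0 mxE.
rewrite mxE psumr_eq0 => [/allP v2_0|i _]; last by rewrite !mxE -expr2 sqr_ge0.
apply/matrixP => i j; rewrite (ord1 j) mxE.
by have := v2_0 i (mem_index_enum _); rewrite /= mxE -expr2 sqrf_eq0 => /eqP.
Qed.

Section SymmetricIdempotent.
Variables (R : realFieldType) (d : nat) (P : 'M[R]_d).
Hypotheses (P_sym : P^T = P) (P_idem : P *m P = P).

Lemma sym_idem_orth_proj (V : 'cV[R]_d -> Prop) :
  (forall x, P *m x = x <-> V x) -> orth_proj_onto P V.
Proof.
move=> fixedP; split=> // x.
by split=> [[y ->]|/fixedP <-]; [apply/fixedP; rewrite mulmxA P_idem|exists x].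
Qed.

Lemma trmx_mul_fixed (u x : 'cV[R]_d) :
  P *m x = x -> u^T *m x = (P *m u)^T *m x.
Proof. by move=> Px; rewrite trmx_mul P_sym -mulmxA Px. Qed.

Definition deflate (v : 'cV[R]_d) : 'M[R]_d :=
  P - ((v^T *m v) 0 0)^-1 *: (v *m v^T).

Section Deflate.
Variable v : 'cV[R]_d.
Hypotheses (Pv : P *m v = v) (v_neq0 : v != 0).

Let c : R := (v^T *m v) 0 0.

Let c_neq0 : c != 0. Proof. by rewrite mulmx_tr_self_eq0. Qed.

Let vTv : v^T *m v = c%:M. Proof. exact: mx11_scalar. Qed.

Let vTP : v^T *m P = v^T. Proof. by rewrite -{1}P_sym -trmx_mul Pv. Qed.

Lemma deflate_sym : (deflate v)^T = deflate v.
Proof. by rewrite linearB /= linearZ /= trmx_mul trmxK P_sym. Qed.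

Lemma tr_mul_deflate : v^T *m deflate v = 0.
Proof.
rewrite /deflate -/c mulmxBr vTP -scalemxAr mulmxA vTv mul_scalar_mx scalerA.
by rewrite mulVf // scale1r subrr.
Qed.

Lemma deflate_fixed (x : 'cV[R]_d) :
  deflate v *m x = x <-> P *m x = x /\ v^T *m x = 0.
Proof.
have deflateE : v^T *m x = 0 -> deflate v *m x = P *m x.
  by move=> vx; rewrite mulmxBl -scalemxAl -mulmxA vx mulmx0 scaler0 subr0.
split=> [fixed_x | [Px vx]]; last by rewrite deflateE.
have vx : v^T *m x = 0 by rewrite -fixed_x mulmxA tr_mul_deflate mul0mx.
by rewrite -deflateE.
Qed.

Lemma deflate_idem : deflate v *m deflate v = deflate v.
Proof.
rewrite {1}/deflate mulmxBl -scalemxAl -mulmxA tr_mul_deflate mulmx0 scaler0.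
by rewrite subr0 /deflate mulmxBr P_idem -scalemxAr mulmxA Pv.
Qed.

End Deflate.

Lemma proj_stepE n (A : 'M[R]_(n, d)) (wl : 'cV[R]_n) :
  proj_step A wl P =
  if P *m (A^T *m wl) != 0 then deflate (P *m (A^T *m wl)) else P.
Proof.
have vT : (P *m (A^T *m wl))^T = wl^T *m A *m P.
  by rewrite !trmx_mul trmxK P_sym.
by rewrite /proj_step /deflate vT !mulmxA -(mulmxA _ P P) P_idem.
Qed.

Lemma proj_step_spec n (A : 'M[R]_(n, d)) (wl : 'cV[R]_n)
    (Q := proj_step A wl P) :
  [/\ Q^T = Q, Q *m Q = Q &
      forall x : 'cV[R]_d, Q *m x = x <-> P *m x = x /\ (A^T *m wl)^T *m x = 0].
Proof.
rewrite /Q proj_stepE; set v := P *m (A^T *m wl).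
case: ifPn => [v_neq0 | /negPn/eqP v0]; last first.
  split=> // x; split=> [Px | [] //]; split=> //.
  by rewrite (trmx_mul_fixed _ Px) -/v v0 trmx0 mul0mx.
have Pv : P *m v = v by rewrite /v mulmxA P_idem.
split; [exact: deflate_sym | exact: deflate_idem | move=> x].
rewrite deflate_fixed //; split=> -[Px vx]; split=> //.
  by rewrite (trmx_mul_fixed _ Px).
by rewrite -(trmx_mul_fixed _ Px).
Qed.

End SymmetricIdempotent.

Section Perp.
Variables (R : realFieldType) (n d : nat).
Variables (A : 'M[R]_(n, d)) (w : nat -> 'cV[R]_n).

Lemma in_perpE l (x : 'cV[R]_d) :
  in_perp A w l x <-> forall i, (i < l)%N -> (A^T *m w i)^T *m x = 0.
Proof.
split=> [perp_x i il | orth_x y /mulmxKpV <-].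
  apply: perp_x.
  by rewrite -(rowK (fun i : 'I_l => (A^T *m w i)^T) (Ordinal il)) row_sub.
have gen_x : gen_mx A w l *m x = 0.
  by apply/row_matrixP => i; rewrite row_mul rowK row0 orth_x.
by rewrite -!mulmxA gen_x !mulmx0.
Qed.

Lemma in_perp0 (x : 'cV[R]_d) : in_perp A w 0 x.
Proof. by apply/in_perpE. Qed.

Lemma in_perpS l (x : 'cV[R]_d) :
  in_perp A w l.+1 x <-> in_perp A w l x /\ (A^T *m w l)^T *m x = 0.
Proof.
rewrite !in_perpE; split=> [orth_x | [orth_x orth_l] i].
  by split=> [i il|]; apply: orth_x; [exact: ltnW | exact: ltnSn].
by rewrite ltnS leq_eqVlt => /predU1P[-> | /orth_x].
Qed.

Lemma proj_seq_spec l (S := proj_seq A w l) :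
  [/\ S^T = S, S *m S = S &
      forall x : 'cV[R]_d, S *m x = x <-> in_perp A w l x].
Proof.
rewrite {}/S; elim: l => [|l [S_sym S_idem S_fixed]] /=.
  split=> [||x]; rewrite ?trmx1 ?mulmx1 ?mul1mx //.
  by split=> // _; apply: in_perp0.
have [Q_sym Q_idem Q_fixed] := proj_step_spec S_sym S_idem A (w l).
by split=> // x; rewrite Q_fixed in_perpS S_fixed.
Qed.

End Perp.

Theorem mainTheorem2 (R : realFieldType) (n d : nat) (A : 'M[R]_(n, d))
  (w : nat -> 'cV[R]_n) (l : nat) :
  orth_proj_onto (proj_seq A w l) (in_perp A w l).
Proof.
have [S_sym S_idem S_fixed] := proj_seq_spec A w l.
exact: sym_idem_orth_proj.
Qed.
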